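(* Let $K$ be an infinite field containing $\mathbb{F}_q$, let $B\in\mathrm{GL}_n(K)$, and let $N\in\mathrm{GL}_n(K)$ be such that $N^{-1}BN^{(q)}=\Delta$, where $\Delta$ is the matrix with $1$'s on the subdiagonal, last column $(a_0,a_1,\dots,a_{n-1})^T$ and all other entries $0$. Then the splitting field over $K$ of the system $BX^{(q)}=X$ coincides with the splitting field over $K$ of the additive polynomial $f(Y)=Y^{q^n}-a_0Y-a_1Y^q-\cdots-a_{n-1}Y^{q^{n-1}}$.
   Context: $X^{(q)}$, $N^{(q)}$ denote entrywise $q$-th powers. The splitting field over $K$ of $BX^{(q)}=X$ is the subfield of $K_{\mathrm{sep}}$ generated over $K$ by the coordinates of all its solutions in $K_{\mathrm{sep}}^n$. *)

From HB Require Import structures.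
From mathcomp Require Import all_boot all_order all_algebra all_field.
Set Implicit Arguments. Unset Strict Implicit. Unset Printing Implicit Defensive.
Import GRing.Theory.
Local Open Scope ring_scope.

Definition frobmx (R : nzRingType) (q m n : nat) (M : 'M[R]_(m, n)) : 'M[R]_(m, n) :=
  map_mx (fun x => x ^+ q) M.

Definition Delta (R : nzRingType) (n : nat) (a : 'I_n -> R) : 'M[R]_n :=
  \matrix_(i < n, j < n)
    (if j.+1 == n then a i else if i == j.+1 :> nat then 1 else 0).

Definition addpoly (R : nzRingType) (q n : nat) (a : 'I_n -> R) : {poly R} :=
  'X^(q ^ n) - \sum_(i < n) a i *: 'X^(q ^ i).

(* Subfield of L generated over iota(K) by the set S: the intersection of all
   subfields of L containing iota(K) and S. *)
Definition subfield_pred (L : fieldType) (P : pred L) : Prop :=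
  [/\ P 1, (forall x y, P x -> P y -> P (x - y)),
      (forall x y, P x -> P y -> P (x * y)) & (forall x, P x -> P x^-1)].

Definition gen_field (K L : fieldType) (iota : {rmorphism K -> L}) (S : L -> Prop)
  (z : L) : Prop :=
  forall P : pred L, subfield_pred P -> (forall k, P (iota k)) ->
    (forall s, S s -> P s) -> P z.

Definition system_coords (K L : fieldType) (iota : {rmorphism K -> L}) (q n : nat)
  (B : 'M[K]_n) (z : L) : Prop :=
  exists (X : 'cV[L]_n) (i : 'I_n),
    map_mx iota B *m frobmx q X = X /\ z = X i 0.

Definition poly_roots (K L : fieldType) (iota : {rmorphism K -> L}) (p : {poly K})
  (z : L) : Prop := root (map_poly iota p) z.

(* The rows of the Moore matrix [W = (w_i ^ (q ^ j))] built on roots [w_i] of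
   [f] satisfy [W Delta = W^(q)].  Hence for a solution [X] of [B X^(q) = X] the
   vector [W N^-1 X] is fixed by entrywise q-th powering, i.e. lies in [F_q^n],
   and [X = N W^-1 (W N^-1 X)] has coordinates in [K(roots of f)] once [W] is
   invertible.  Conversely the columns of [N W^-1] are solutions, so [W^-1] and
   [W] are defined over [K(coordinates)]; a root [x] gives a Moore row [r] with
   [r W^-1] over [F_q], and [x = (r W^-1 W)_(0,0)].  An invertible [W] exists
   because [a_0 != 0] (as [Delta] is invertible) makes [f] separable with [q^n]
   distinct roots, which no nonzero linearized polynomial of degree at most
   [q^(n-1)] can vanish on. *)

From HB Require Import structures.
From mathcomp Require Import all_boot all_order all_algebra all_field.
Set Implicit Arguments. Unset Strict Implicit. Unset Printing Implicit Defensive.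
Import GRing.Theory.
Local Open Scope ring_scope.

Section SubfieldPred.
Variables (L : fieldType) (P : pred L).
Hypothesis sP : subfield_pred P.

Lemma subfield_pred1 : P 1. Proof. by case: sP. Qed.

Lemma subfield_predB x y : P x -> P y -> P (x - y).
Proof. by case: sP => _ + _ _; apply. Qed.

Lemma subfield_predM x y : P x -> P y -> P (x * y).
Proof. by case: sP => _ _ + _; apply. Qed.

Lemma subfield_predV x : P x -> P x^-1.
Proof. by case: sP => _ _ _; apply. Qed.

Lemma subfield_pred0 : P 0.
Proof. by rewrite -(subrr 1) subfield_predB ?subfield_pred1. Qed.

Lemma subfield_predN x : P x -> P (- x).
Proof. by move=> Px; rewrite -sub0r subfield_predB ?subfield_pred0. Qed.

Lemma subfield_predD x y : P x -> P y -> P (x + y).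
Proof. by move=> Px Py; rewrite -[y]opprK subfield_predB ?subfield_predN. Qed.

Lemma subfield_predX x k : P x -> P (x ^+ k).
Proof.
by move=> Px; elim: k => [|k IHk]; rewrite ?expr0 ?subfield_pred1 ?exprS ?subfield_predM.
Qed.

Lemma subfield_pred_sum I (r : seq I) (Q : pred I) (F : I -> L) :
  (forall i, Q i -> P (F i)) -> P (\sum_(i <- r | Q i) F i).
Proof. by move=> PF; elim/big_ind: _ => //; [exact: subfield_pred0 | exact: subfield_predD]. Qed.

Lemma subfield_pred_prod I (r : seq I) (Q : pred I) (F : I -> L) :
  (forall i, Q i -> P (F i)) -> P (\prod_(i <- r | Q i) F i).
Proof. by move=> PF; elim/big_ind: _ => //; [exact: subfield_pred1 | exact: subfield_predM]. Qed.

Definition mx_over m n (A : 'M[L]_(m, n)) := forall i j, P (A i j).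

Lemma mx_over_mul m n k (A : 'M[L]_(m, n)) (C : 'M[L]_(n, k)) :
  mx_over A -> mx_over C -> mx_over (A *m C).
Proof.
by move=> PA PC i j; rewrite mxE subfield_pred_sum // => l _; rewrite subfield_predM.
Qed.

Lemma mx_over_det n (A : 'M[L]_n) : mx_over A -> P (\det A).
Proof.
move=> PA; apply: subfield_pred_sum => s _.
rewrite subfield_predM ?subfield_predX ?subfield_predN ?subfield_pred1 //.
by apply: subfield_pred_prod => i _.
Qed.

Lemma mx_over_inv n (A : 'M[L]_n) : mx_over A -> mx_over (invmx A).
Proof.
move=> PA; rewrite /invmx; case: (A \in unitmx) => // i j.
rewrite !mxE subfield_predM ?subfield_predV ?mx_over_det //.
rewrite /cofactor subfield_predM ?subfield_predX ?subfield_predN ?subfield_pred1 //.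
by apply: mx_over_det => k l; rewrite !mxE.
Qed.

End SubfieldPred.

Lemma gen_field_sub (K L : fieldType) (iota : {rmorphism K -> L}) (S T : L -> Prop) :
  (forall s, S s -> gen_field iota T s) ->
  forall z, gen_field iota S z -> gen_field iota T z.
Proof. by move=> ST z Sz P sP Piota PT; apply: Sz => // s /ST; apply. Qed.

Lemma mx_over_map (K L : fieldType) (iota : {rmorphism K -> L}) (P : pred L) m n
  (A : 'M[K]_(m, n)) : (forall k, P (iota k)) -> mx_over P (map_mx iota A).
Proof. by move=> Piota i j; rewrite mxE. Qed.

Section FrobeniusMatrix.
Variables (R : fieldType) (p : nat).
Hypothesis chR : p \in [pchar R].

Lemma frobmx_pchar_iter k m n (A : 'M[R]_(m, n)) :
  frobmx (p ^ k) A = iter k (map_mx (pFrobenius_aut chR)) A.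
Proof.
elim: k => [|k IHk] /=; first by apply/matrixP => i j; rewrite !mxE expn0 expr1.
by rewrite -IHk; apply/matrixP => i j; rewrite !mxE pFrobenius_autE -exprM expnSr.
Qed.

Lemma frobmx_pcharM k m n l (A : 'M[R]_(m, n)) (C : 'M[R]_(n, l)) :
  frobmx (p ^ k) (A *m C) = frobmx (p ^ k) A *m frobmx (p ^ k) C.
Proof. by rewrite !frobmx_pchar_iter; elim: k => //= k ->; rewrite map_mxM. Qed.

Lemma frobmx_pchar_unitmx k n (A : 'M[R]_n) :
  (frobmx (p ^ k) A \in unitmx) = (A \in unitmx).
Proof. by rewrite frobmx_pchar_iter; elim: k => //= k <-; rewrite map_unitmx. Qed.

End FrobeniusMatrix.

Lemma finField_card_pchar (F : finFieldType) :
  {p | p \in [pchar F] & exists k, #|F| = (p ^ k.+1)%N}.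
Proof.
have [p _ chF] := finPcharP F; exists p => //.
have := card_pprimeChar chF; case: (logn _ _) => [|k] cardF; last by exists k.
by have := finNzRing_gt1 F; rewrite [#|F|]cardF.
Qed.

Section CardFrobenius.
Variables (F : finFieldType) (R : fieldType) (emb : {rmorphism F -> R}).

Lemma natr_card_finField : (#|F|%:R : R) = 0.
Proof.
have [p chF [k ->]] := finField_card_pchar F.
by rewrite natrX (GRing.pcharf0 (rmorph_pchar emb chF)) expr0n.
Qed.

Lemma frobmx_cardM m n l (A : 'M[R]_(m, n)) (C : 'M[R]_(n, l)) :
  frobmx #|F| (A *m C) = frobmx #|F| A *m frobmx #|F| C.
Proof.
have [p chF [k ->]] := finField_card_pchar F.
exact: (frobmx_pcharM (rmorph_pchar emb chF) k.+1).
Qed.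

Lemma frobmx_card_unitmx n (A : 'M[R]_n) :
  (frobmx #|F| A \in unitmx) = (A \in unitmx).
Proof.
have [p chF [k ->]] := finField_card_pchar F.
exact: (frobmx_pchar_unitmx (rmorph_pchar emb chF) k.+1).
Qed.

Lemma expf_card_fixed_image (c : R) : c ^+ #|F| = c -> exists x, c = emb x.
Proof.
move=> cF; have := congr1 (map_poly emb) (finField_genPoly F).
rewrite rmorphB /= map_polyXn map_polyX rmorph_prod /= => genF.
have : root (\prod_x map_poly emb ('X - x%:P)) c by rewrite -genF rootE !hornerE cF subrr.
under eq_bigr => x _ do rewrite map_polyXsubC.
rewrite -big_enum /= -(big_map emb xpredT (fun y => 'X - y%:P)) root_prod_XsubC.
by case/mapP=> x _ ->; exists x.
Qed.

End CardFrobenius.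

Lemma frobmx1 (R : nzRingType) q n : (0 < q)%N -> frobmx q (1%:M : 'M[R]_n) = 1%:M.
Proof.
move=> q_gt0; apply/matrixP => i j; rewrite !mxE.
by case: (i == j); rewrite ?expr1n // expr0n gtn_eqF.
Qed.

Lemma col_frobmx (R : nzRingType) q m n (j : 'I_n) (X : 'M[R]_(m, n)) :
  col j (frobmx q X) = frobmx q (col j X).
Proof. by apply/matrixP => i k; rewrite !mxE. Qed.

Lemma map_frobmx (K L : fieldType) (iota : {rmorphism K -> L}) q m n (A : 'M[K]_(m, n)) :
  map_mx iota (frobmx q A) = frobmx q (map_mx iota A).
Proof. by apply/matrixP => i j; rewrite !mxE rmorphXn. Qed.

Lemma map_Delta (K L : fieldType) (iota : {rmorphism K -> L}) n (a : 'I_n -> K) :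
  map_mx iota (Delta a) = Delta (iota \o a).
Proof. by apply/matrixP => i j; rewrite !mxE; do 2!case: ifP => //; rewrite ?rmorph1 ?rmorph0. Qed.

Lemma Delta_unitmx_coef0 (R : comUnitRingType) n (a : 'I_n.+1 -> R) :
  Delta a \in unitmx -> a ord0 != 0.
Proof.
move=> Da; apply: contraNneq (oner_neq0 R) => a0.
have := congr1 (fun M : 'M[R]_n.+1 => M ord0 ord0) (mulmxV Da); rewrite /= !mxE eqxx mulr1n => <-.
by rewrite big1 // => j _; rewrite !mxE; case: ifP => _; rewrite ?a0 mul0r.
Qed.

Definition linearized_poly (L : nzRingType) q n (c : 'I_n -> L) : {poly L} :=
  \sum_i c i *: 'X^(q ^ i).

Section LinearizedPoly.
Variables (L : fieldType) (q n : nat) (c : 'I_n -> L).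
Hypothesis q_gt1 : (1 < q)%N.

Lemma coef_linearized_poly j : (linearized_poly q c)`_j = \sum_i c i * (j == q ^ i)%N%:R.
Proof. by rewrite coef_sum; apply: eq_bigr => i _; rewrite coefZ coefXn. Qed.

Lemma coef_linearized_poly_exp (k : 'I_n) : (linearized_poly q c)`_(q ^ k) = c k.
Proof.
rewrite coef_linearized_poly (bigD1 k) //= eqxx mulr1 big1 ?addr0 // => i ik.
by rewrite eqn_exp2l // (inj_eq val_inj) eq_sym (negbTE ik) mulr0.
Qed.

Lemma size_linearized_poly : (size (linearized_poly q c) <= (q ^ n.-1).+1)%N.
Proof.
apply/leq_sizeP => j lt_j; rewrite coef_linearized_poly big1 // => i _.
suff /negbTE-> : j != (q ^ i)%N by rewrite mulr0.
rewrite neq_ltn; apply/orP; right; apply: leq_ltn_trans lt_j.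
by rewrite leq_pexp2l ?(ltnW q_gt1) // -ltnS (ltn_predK (ltn_ord i)).
Qed.

Lemma horner_linearized_poly x : (linearized_poly q c).[x] = \sum_i c i * x ^+ (q ^ i).
Proof. by rewrite horner_sum; apply: eq_bigr => i _; rewrite hornerZ hornerXn. Qed.

End LinearizedPoly.

Lemma separable_Xn_sub_linearized_poly (L : fieldType) q n (c : 'I_n.+1 -> L) :
  (q%:R : L) = 0 -> c ord0 != 0 -> separable_poly ('X^(q ^ n.+1) - linearized_poly q c).
Proof.
move=> q0 c0; have qk0 k (x : {poly L}) : (0 < k)%N -> x *+ (q ^ k) = 0.
  by case: k => // k _; rewrite expnS mulrnA -[x *+ q]mulr_natr -polyC_natr q0 mulr0 mul0rn.
have der : ('X^(q ^ n.+1) - linearized_poly q c)^`() = - (c ord0)%:P.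
  rewrite derivB derivXn qk0 // sub0r raddf_sum big_ord_recl big1 ?addr0 /=.
    by rewrite derivZ expn0 derivX alg_polyC.
  by move=> i _; rewrite derivZ derivXn qk0 // scaler0.
by rewrite unlock der -polyCN -alg_polyC coprimepZr ?oppr_eq0 ?coprimep1.
Qed.

Lemma separable_closed_roots (L : closedFieldType) (f : {poly L}) :
  f != 0 -> separable_poly f ->
  exists s : seq L, [/\ uniq s, size s = (size f).-1 & all (root f) s].
Proof.
move=> f0 sepf; have [s def_f] := closed_field_poly_normal f.
have lc0 : lead_coef f != 0 by rewrite lead_coef_eq0.
exists s; split.
- by rewrite -separable_prod_XsubC -(eqp_separable (eqp_scale _ lc0)) -def_f.
- by rewrite def_f size_scale // size_prod_XsubC.
- by apply/allP => x xs; rewrite def_f rootZ // root_prod_XsubC.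
Qed.

Lemma uniq_roots_Xn_sub_linearized_poly (L : closedFieldType) q n (c : 'I_n.+1 -> L) :
  (1 < q)%N -> (q%:R : L) = 0 -> c ord0 != 0 ->
  exists s : seq L, [/\ uniq s, size s = (q ^ n.+1)%N &
    all (root ('X^(q ^ n.+1) - linearized_poly q c)) s].
Proof.
move=> q_gt1 q0 c0; set f := _ - _.
have size_f : size f = (q ^ n.+1).+1.
  rewrite size_polyDl size_polyXn // size_polyN.
  by apply: leq_ltn_trans (size_linearized_poly c q_gt1) _; rewrite ltnS ltn_exp2l.
have f0 : f != 0 by rewrite -size_poly_eq0 size_f.
have [s [s_uniq size_s s_roots]] :=
  separable_closed_roots f0 (separable_Xn_sub_linearized_poly q0 c0).
by exists s; rewrite size_s size_f.
Qed.

Definition moore (L : nzRingType) q m n (w : 'I_m -> L) : 'M[L]_(m, n) :=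
  \matrix_(i, j) w i ^+ (q ^ j).

Lemma moore_mul_Delta (L : fieldType) q n m (c : 'I_n -> L) (w : 'I_m -> L) :
  (forall i, root ('X^(q ^ n) - linearized_poly q c) (w i)) ->
  moore q n w *m Delta c = frobmx q (moore q n w).
Proof.
move=> w_root; apply/matrixP => i j; rewrite !mxE -exprM -expnSr.
under eq_bigr => l _ do rewrite !mxE.
have [jn | jn] := eqVneq j.+1 n.
  move: (w_root i); rewrite rootE hornerD hornerN hornerXn subr_eq0.
  rewrite horner_linearized_poly jn => /eqP->.
  by apply: eq_bigr => l _; rewrite mulrC.
have lt_jn : (j.+1 < n)%N by rewrite ltn_neqAle jn ltn_ord.
rewrite (bigD1 (Ordinal lt_jn)) //= eqxx mulr1 big1 ?addr0 // => l lj.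
by rewrite ifF ?mulr0 //; apply: contraNF lj => /eqP lj; apply/eqP/val_inj.
Qed.

Lemma row_full_moore_seq (L : fieldType) q n (s : seq L) :
  (1 < q)%N -> (0 < n)%N -> uniq s -> size s = (q ^ n)%N ->
  row_full (\matrix_(i < size s, j < n) s`_i ^+ (q ^ j)).
Proof.
move=> q_gt1 n_gt0 s_uniq size_s; set A := \matrix_(i, j) _.
apply: contraT => A_nfull.
have /rowV0Pn[u /sub_kermxP uA u0] : kermx A^T != 0.
  by rewrite kermx_eq0 /row_free mxrank_tr.
set h := linearized_poly q (u ord0).
have h0 : h != 0.
  apply: contra u0 => /eqP h0; apply/eqP/rowP => j.
  by rewrite mxE -(coef_linearized_poly_exp _ q_gt1) -/h h0 coef0.
have h_roots : all (root h) s.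
  apply/allP => x /(nthP 0)[i lt_is <-]; rewrite /root horner_linearized_poly.
  have /matrixP/(_ ord0 (Ordinal lt_is)) := uA; rewrite !mxE => uAi.
  by apply/eqP; rewrite -[RHS]uAi; apply: eq_bigr => j _; rewrite !mxE.
have := leq_trans (max_poly_roots h0 h_roots s_uniq) (size_linearized_poly _ q_gt1).
by rewrite size_s ltnS leqNgt ltn_exp2l // ltn_predL n_gt0.
Qed.

Lemma exists_moore_unitmx (L : fieldType) q n (s : seq L) :
  (1 < q)%N -> (0 < n)%N -> uniq s -> size s = (q ^ n)%N ->
  exists2 w : 'I_n -> L, forall i, w i \in s & moore q n w \in unitmx.
Proof.
move=> q_gt1 n_gt0 s_uniq size_s.
have A_full := row_full_moore_seq q_gt1 n_gt0 s_uniq size_s.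
set f := fullrankfun A_full; exists (fun i => s`_(f i)) => [i|]; first exact/mem_nth.
have -> : moore q n (fun i => s`_(f i)) = rowsub f (\matrix_(i, j) s`_i ^+ (q ^ j)).
  by apply/matrixP => i j; rewrite !mxE.
exact: fullrowsub_unit.
Qed.

Lemma map_addpoly (K L : fieldType) (iota : {rmorphism K -> L}) q n (a : 'I_n -> K) :
  map_poly iota (addpoly q a) = 'X^(q ^ n) - linearized_poly q (iota \o a).
Proof.
rewrite /addpoly /linearized_poly rmorphB /= map_polyXn raddf_sum; congr (_ - _).
by apply: eq_bigr => i _; rewrite /= map_polyZ map_polyXn.
Qed.

Section SplittingField.
Variables (K L : fieldType) (iota : {rmorphism K -> L}).
Variables (Fq : finFieldType) (emb : {rmorphism Fq -> K}).
Local Notation q := #|Fq|.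
Variables (n : nat) (B N : 'M[K]_n) (a : 'I_n -> K).
Hypotheses (N_unit : N \in unitmx) (hN : invmx N *m B *m frobmx q N = Delta a).

Local Notation Bl := (map_mx iota B).
Local Notation Nl := (map_mx iota N).
Local Notation Dl := (Delta (iota \o a)).
Local Notation roots := (poly_roots iota (addpoly q a)).

Let Nl_unit : Nl \in unitmx. Proof. by rewrite map_unitmx. Qed.

Lemma B_frobmx_N : Bl *m frobmx q Nl = Nl *m Dl.
Proof.
have BN : B *m frobmx q N = N *m Delta a by rewrite -hN !mulmxA mulmxV // mul1mx.
by rewrite -map_frobmx -map_Delta -!map_mxM BN.
Qed.

Lemma frobmx_moore_mul m l (w : 'I_m -> L) (Z : 'M[L]_(n, l)) :
  (forall i, roots (w i)) -> frobmx q (moore q n w *m Z) = moore q n w *m (Dl *m frobmx q Z).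
Proof.
move=> w_root; rewrite (frobmx_cardM (iota \o emb)) mulmxA moore_mul_Delta // => i.
by rewrite -map_addpoly; apply: w_root.
Qed.

Lemma mx_over_frobmx_fixed (P : pred L) m l (C : 'M[L]_(m, l)) :
  (forall k, P (iota k)) -> frobmx q C = C -> mx_over P C.
Proof.
move=> Piota /matrixP FC i j; move: (FC i j); rewrite mxE.
by case/(expf_card_fixed_image (iota \o emb)) => x ->; apply: Piota.
Qed.

Variable w : 'I_n -> L.
Hypotheses (w_root : forall i, roots (w i)) (W_unit : moore q n w \in unitmx).
Local Notation W := (moore q n w).

Lemma system_coords_gen_roots x :
  system_coords iota q B x -> gen_field iota roots x.
Proof.
case=> X [i [BX ->]] P sP Piota Proots.
set Y := invmx Nl *m X.
have DY : Dl *m frobmx q Y = Y.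
  rewrite -[Dl](mulKmx Nl_unit) -B_frobmx_N -!mulmxA.
  by rewrite -(frobmx_cardM (iota \o emb)) mulKVmx // BX.
set c := W *m Y.
have Fc : frobmx q c = c by rewrite frobmx_moore_mul // DY.
have -> : X = Nl *m (invmx W *m c) by rewrite /c mulKmx // mulKVmx.
apply: (mx_over_mul sP); first exact: mx_over_map.
apply: (mx_over_mul sP); last exact: mx_over_frobmx_fixed.
by apply: mx_over_inv => // k l; rewrite mxE subfield_predX // Proots.
Qed.

Lemma poly_roots_gen_system (n_gt0 : (0 < n)%N) x :
  roots x -> gen_field iota (system_coords iota q B) x.
Proof.
move=> x_root P sP Piota Psys.
have DWi : Dl *m frobmx q (invmx W) = invmx W.
  apply: (can_inj (mulKmx W_unit)).
  by rewrite -frobmx_moore_mul // !mulmxV // frobmx1 ?(ltnW (finNzRing_gt1 _)).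
have BX : Bl *m frobmx q (Nl *m invmx W) = Nl *m invmx W.
  by rewrite (frobmx_cardM (iota \o emb)) mulmxA B_frobmx_N -mulmxA DWi.
have PNWi : mx_over P (Nl *m invmx W).
  move=> i j; apply: Psys; exists (col j (Nl *m invmx W)), i; split; last by rewrite [RHS]mxE.
  by rewrite -col_frobmx !colE mulmxA BX.
have PWi : mx_over P (invmx W).
  rewrite -(mulKmx Nl_unit (invmx W)) -map_invmx.
  by apply: (mx_over_mul sP) => //; apply: mx_over_map.
have PW : mx_over P W by rewrite -[W]invmxK; apply: mx_over_inv.
set r := moore q n (fun _ : 'I_1 => x).
have Fd : frobmx q (r *m invmx W) = r *m invmx W by rewrite frobmx_moore_mul // DWi.
have -> : x = (r *m invmx W *m W) ord0 (Ordinal n_gt0) by rewrite mulmxKV // mxE expn0 expr1.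
by apply: (mx_over_mul sP) => //; apply: mx_over_frobmx_fixed.
Qed.

End SplittingField.

Theorem corollary4p5
  (K : fieldType)
  (K_infinite : forall s : seq K, exists x : K, x \notin s)
  (q : nat) (Fq : finFieldType) (card_Fq : #|Fq| = q)
  (emb : {rmorphism Fq -> K})
  (n : nat) (n_gt0 : (0 < n)%N)
  (B N : 'M[K]_n) (B_unit : B \in unitmx) (N_unit : N \in unitmx)
  (a : 'I_n -> K)
  (hN : invmx N *m B *m frobmx q N = Delta a)
  (L : closedFieldType) (iota : {rmorphism K -> L}) :
  forall z : L,
    gen_field iota (system_coords iota q B) z <->
    gen_field iota (poly_roots iota (addpoly q a)) z.
Proof.
subst q; case: n n_gt0 B N B_unit N_unit a hN => // n _ B N B_unit N_unit a hN.
have q_gt1 := finNzRing_gt1 Fq.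
have Delta_unit : Delta a \in unitmx.
  by rewrite -hN !unitmx_mul unitmx_inv B_unit N_unit (frobmx_card_unitmx emb).
have a0 : (iota \o a) ord0 != 0 by rewrite /= fmorph_eq0 Delta_unitmx_coef0.
have [s [s_uniq size_s s_roots]] :=
  uniq_roots_Xn_sub_linearized_poly q_gt1 (natr_card_finField (iota \o emb)) a0.
have [w w_s W_unit] := exists_moore_unitmx q_gt1 (ltn0Sn n) s_uniq size_s.
have w_root i : poly_roots iota (addpoly #|Fq| a) (w i).
  by rewrite /poly_roots map_addpoly (allP s_roots).
move=> z; split; apply: gen_field_sub => x.
- exact: (system_coords_gen_roots emb N_unit hN w_root W_unit).
- exact: (poly_roots_gen_system emb N_unit hN w_root W_unit (ltn0Sn n)).
Qed.
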